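(* Let $L_1',L_2'\subseteq\mathcal{P}$ be simple event logs, $bk\in\mathcal{A}^*$, $n\in\mathbb{N}_{\ge1}$, $M_1=ms^{L_1',n}(bk)$ and $M_2=ms^{L_2',n}(bk)$. Let $CG(M_1,M_2)$ be the set of pairs $(g_1',g_2')$ where $g_1'$ is a group of $M_1$, $g_2'$ is a group of $M_2$, and $g_1'\overset{n}{\sim}g_2'$, and set $C(M_1,M_2)=\sum_{(g_1',g_2')\in CG(M_1,M_2)}\big(|g_2'|-\min(|g_1'|,|g_2'|)\big)$. Then for every linker $f$ (w.r.t. $n$) from $L_1'$ to $L_2'$, at least $C(M_1,M_2)$ elements of $M_2$ are not of the form $f(p_1')$ with $p_1'\in M_1$; more precisely, for each $(g_1',g_2')\in CG(M_1,M_2)$, at least $|g_2'|-\min(|g_1'|,|g_2'|)$ elements of $g_2'$ are not images under $f$ of elements of $M_1$.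
   Context: $\mathcal{P}=\mathcal{C}\times\mathcal{A}^*\times\mathcal{S}$ is the set of simple process instances $p=(c,\sigma,s)$ (case id, sequence of activities, sensitive value) with projections $\pi_c,\pi_\sigma,\pi_s$; a simple event log is a finite $L\subseteq\mathcal{P}$ in which elements with equal case ids are equal. $\sqsubseteq$ is the (not necessarily contiguous) subsequence relation; $pref(\langle a_1,\dots,a_m\rangle)=\{\langle a_1,\dots,a_k\rangle\mid 1\le k\le m\}$; $LCS(\sigma_1,\sigma_2)$ is the set of longest common subsequences, $LCS^{\sigma_1}_{\sigma_2}$ their length, and $SCS^{\sigma_1}_{\sigma_2}$ the length of a shortest common super-sequence. Specialization: $p'\preceq_n p$ iff $\pi_\sigma(p')\sqsubseteq\pi_\sigma(p)$, $|\pi_\sigma(p)|\le|\pi_\sigma(p')|+n$, and $\pi_s(p)=\pi_s(p')$. Matching set: $ms^{L',n}(bk)=\{p'\in L'\mid \exists p\in\mathcal{P}: p'\preceq_n p \wedge bk\sqsubseteq\pi_\sigma(p)\}$. A group of a matching set $M$ is a nonempty set of the form $\{p\in M\mid \pi_s(p)=v\}$ for some $v\in\mathcal{S}$. Linker: a total injective function $f:L_1'\to L_2'$ such that for every $p_1'\in L_1'$ there exist $p_1,p_2\in\mathcal{P}$ with $p_1'\preceq_n p_1$, $f(p_1')\preceq_n p_2$, $\pi_s(p_1)=\pi_s(p_2)$, and $\pi_\sigma(p_1)\in pref(\pi_\sigma(p_2))$. Comparable sequences: $\sigma_1\overset{n}{\sim}\sigma_2$ iff $n\ge|\sigma_1|-LCS^{\sigma_1}_{\sigma_2}$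 in case some $\sigma\in LCS(\sigma_1,\sigma_2)$ lies in $pref(\sigma_2)$, and $n\ge SCS^{\sigma_1}_{\sigma_2}-\min(|\sigma_1|,|\sigma_2|)$ otherwise. Comparable process instances: $p_1\overset{n}{\sim}p_2$ iff $\pi_s(p_1)=\pi_s(p_2)$ and $\pi_\sigma(p_1)\overset{n}{\sim}\pi_\sigma(p_2)$. Comparable groups: $g_1'\overset{n}{\sim}g_2'$ iff $p_1'\overset{n}{\sim}p_2'$ for all $p_1'\in g_1'$, $p_2'\in g_2'$. *)

From mathcomp Require Import all_boot finmap.
From mathcomp Require Import boolp.

Set Implicit Arguments.
Unset Strict Implicit.
Unset Printing Implicit Defensive.

Local Open Scope fset_scope.

Section Defs.
Variables (C A S : choiceType).

Definition proc := (C * seq A * S)%type.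
Definition pc (p : proc) : C := p.1.1.
Definition psig (p : proc) : seq A := p.1.2.
Definition ps (p : proc) : S := p.2.

Definition simple_log (L : {fset proc}) : Prop :=
  forall p q, p \in L -> q \in L -> pc p = pc q -> p = q.

Definition in_pref (s t : seq A) : bool := (0 < size s) && prefix s t.

Definition spec (n : nat) (p' p : proc) : Prop :=
  [/\ subseq (psig p') (psig p), size (psig p) <= size (psig p') + n
    & ps p = ps p'].

Definition ms (L' : {fset proc}) (n : nat) (bk : seq A) : {fset proc} :=
  [fset p' in L' | `[< exists p : proc, spec n p' p /\ subseq bk (psig p) >]].

Definition is_group (M g : {fset proc}) : Prop :=
  g != fset0 /\ exists v : S, g = [fset p in M | ps p == v].

Definition linker (n : nat) (L1' L2' : {fset proc}) (f : proc -> proc) : Prop :=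
  [/\ {in L1', forall p, f p \in L2'},
      {in L1' &, injective f}
    & {in L1', forall p1', exists p1 p2 : proc,
          [/\ spec n p1' p1, spec n (f p1') p2, ps p1 = ps p2
            & in_pref (psig p1) (psig p2)]}].

Definition is_LCS (s1 s2 s : seq A) : Prop :=
  [/\ subseq s s1, subseq s s2 &
      forall t, subseq t s1 -> subseq t s2 -> size t <= size s].

Definition is_SCS (s1 s2 s : seq A) : Prop :=
  [/\ subseq s1 s, subseq s2 s &
      forall t, subseq s1 t -> subseq s2 t -> size s <= size t].

(* comparable sequences sigma1 ~n sigma2 (LCS^{s1}_{s2} is the common length
   of all elements of LCS(s1,s2), SCS^{s1}_{s2} the common length of all
   shortest common super-sequences) *)
Definition comparable_seq (n : nat) (s1 s2 : seq A) : Prop :=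
  ((exists s, is_LCS s1 s2 s /\ in_pref s s2) ->
     forall s, is_LCS s1 s2 s -> size s1 - size s <= n) /\
  (~ (exists s, is_LCS s1 s2 s /\ in_pref s s2) ->
     forall s, is_SCS s1 s2 s -> size s - minn (size s1) (size s2) <= n).

Definition comparable_proc (n : nat) (p1 p2 : proc) : Prop :=
  ps p1 = ps p2 /\ comparable_seq n (psig p1) (psig p2).

Definition comparable_group (n : nat) (g1 g2 : {fset proc}) : Prop :=
  forall p1 p2, p1 \in g1 -> p2 \in g2 -> comparable_proc n p1 p2.

Definition CG (n : nat) (M1 M2 : {fset proc}) : {fset {fset proc} * {fset proc}} :=
  [fset gg in fpowerset M1 `*` fpowerset M2 |
     `[< is_group M1 gg.1 /\ is_group M2 gg.2 /\ comparable_group n gg.1 gg.2 >]].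

Definition Cnt (n : nat) (M1 M2 : {fset proc}) : nat :=
  \sum_(gg <- CG n M1 M2) (#|` gg.2| - minn #|` gg.1| #|` gg.2|).

End Defs.

From mathcomp Require Import all_boot finmap boolp.
From mathcomp Require Import zify.

(* A linker f never changes the sensitive value of an instance,
   and every pair (g1, g2) of CG(M1, M2) consists of the full value classes
   of M1 and M2 for one common sensitive value v.  Hence an element of g2
   that is the image f x of some x in M1 has value v, so x lies in g1: the
   part of g2 hit by f(M1) is contained in f(g1), and has at most
   min(|g1|, |g2|) elements.  For
   the total bound, distinct pairs of CG have disjoint second components
   inside M2, so the per-pair counts of missed elements add up to at most
   the number of elements of M2 missed by f(M1). *)

Local Open Scope fset_scope.

Section FiniteSets.
Variable T : choiceType.

Lemma card_fsetD_image_cover (T' : choiceType) (f : T' -> T)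
    (G : {fset T'}) (B X : {fset T}) :
  B `&` X `<=` f @` G -> #|` B| - minn #|` G| #|` B| <= #|` B `\` X|.
Proof.
move=> cover; rewrite cardfsD.
have le_img : #|` B `&` X| <= #|` G|.
  exact: leq_trans (fsubset_leq_card cover) (leq_imfset_card _ _ _).
have le_B : #|` B `&` X| <= #|` B| by apply: fsubset_leq_card; apply: fsubsetIl.
lia.
Qed.

(* Cardinalities of pairwise disjoint subsets of D sum up to at most |D|;
   disjointness is phrased as "a common element forces equal indices". *)
Lemma sum_card_disjoint (I : eqType) (s : seq I) (F : I -> {fset T})
    (D : {fset T}) :
  uniq s ->
  {in s &, forall i j, forall x, x \in F i -> x \in F j -> i = j} ->
  {in s, forall i, F i `<=` D} ->
  \sum_(i <- s) #|` F i| <= #|` D|.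
Proof.
elim: s D => [|i s IH] D /=; first by rewrite big_nil.
move=> /andP [i_notin_s uniq_s] disj subD; rewrite big_cons.
have FiD : F i `<=` D by apply: subD; rewrite mem_head.
rewrite -(cardfsID (F i) D) (fsetIidPr FiD) leq_add2l.
apply: IH => // [j k js ks | j js]; first by apply: disj; rewrite inE ?js ?ks orbT.
apply/fsubsetP => x xFj; rewrite inE (fsubsetP (subD j _)) ?inE ?js ?orbT // andbT.
apply/negP => xFi; have eq_ij : i = j by apply: (disj i j _ _ x); rewrite ?inE ?eqxx ?js ?orbT.
by move: i_notin_s; rewrite eq_ij js.
Qed.

End FiniteSets.

Section Linkers.
Variables (C A S : choiceType).
Local Notation P := (proc C A S).

(* A linker keeps the sensitive value: both p1' and f p1' specialize to
   instances with one common sensitive value. *)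
Lemma linker_ps {n} {L1' L2' : {fset P}} {f} :
  linker n L1' L2' f -> {in L1', forall p, ps (f p) = ps p}.
Proof.
move=> [_ _ linked] p /linked [p1 [p2 [[_ _ ps_p1] [_ _ ps_p2] ps_eq _]]].
by rewrite -ps_p2 -ps_eq ps_p1.
Qed.

Lemma CG_groupsE {n} {M1 M2 g1 g2 : {fset P}} {p} :
  (g1, g2) \in CG n M1 M2 -> p \in g2 ->
  g1 = [fset q in M1 | ps q == ps p] /\ g2 = [fset q in M2 | ps q == ps p].
Proof.
rewrite inE /= => /andP [_ /asboolP /= [[ne1 [v1 g1E]] [[_ [v2 g2E]] cmp]]] pg2.
have ps_p : ps p = v2 by move: pg2; rewrite g2E !inE => /andP [_ /eqP].
have [q qg1] : exists q, q \in g1.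
  by case: (fset_0Vmem g1) ne1 => [->|[q ?] _]; [rewrite eqxx | exists q].
have ps_q : ps q = v1 by move: qg1; rewrite g1E !inE => /andP [_ /eqP].
have [ps_qp _] := cmp q p qg1 pg2.
by split; [rewrite g1E -ps_q ps_qp ps_p | rewrite g2E ps_p].
Qed.

Lemma CG_image_cover n (M1 M2 g1 g2 : {fset P}) f :
  {in M1, forall p, ps (f p) = ps p} -> (g1, g2) \in CG n M1 M2 ->
  g2 `&` [fset f x | x in M1] `<=` f @` g1.
Proof.
move=> fps inCG; apply/fsubsetP => p; rewrite !inE => /andP [pg2 /imfsetP [x /= xM1 px]].
have [g1E _] := CG_groupsE inCG pg2.
by apply/imfsetP; exists x; rewrite // g1E !inE xM1 px (fps x xM1) eqxx.
Qed.

Lemma CG_snd_disjoint n (M1 M2 : {fset P}) :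
  {in CG n M1 M2 &, forall gg hh p, p \in gg.2 -> p \in hh.2 -> gg = hh}.
Proof.
move=> [g1 g2] [h1 h2] inCGg inCGh p /= pg2 ph2.
by have [-> ->] := CG_groupsE inCGg pg2; have [-> ->] := CG_groupsE inCGh ph2.
Qed.

Lemma CG_snd_sub n (M1 M2 : {fset P}) : {in CG n M1 M2, forall gg, gg.2 `<=` M2}.
Proof.
move=> [g1 g2] inCG; apply/fsubsetP => p /= pg2.
have [_ g2E] := CG_groupsE inCG pg2.
by move: pg2; rewrite g2E inE => /andP [].
Qed.

End Linkers.
Arguments linker_ps {C A S n L1' L2' f}.
Arguments CG_groupsE {C A S n M1 M2 g1 g2 p}.
Arguments CG_image_cover {C A S n M1 M2 g1 g2 f}.
Arguments CG_snd_disjoint {C A S n M1 M2}.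
Arguments CG_snd_sub {C A S n M1 M2}.

Theorem theorem4 (C A S : choiceType) (L1' L2' : {fset proc C A S})
  (bk : seq A) (n : nat) (f : proc C A S -> proc C A S) :
  simple_log L1' -> simple_log L2' -> 0 < n ->
  linker n L1' L2' f ->
  let M1 := ms L1' n bk in
  let M2 := ms L2' n bk in
  Cnt n M1 M2 <= #|` [fset p in M2 | p \notin [fset f x | x in M1]] | /\
  (forall g1 g2, (g1, g2) \in CG n M1 M2 ->
     #|` g2| - minn #|` g1| #|` g2| <= #|` [fset p in g2 | p \notin [fset f x | x in M1]] |).
Proof.
move=> _ _ _ linked M1 M2; set X := [fset f x | x in M1].
have fps : {in M1, forall p, ps (f p) = ps p}.
  by move=> p; rewrite /M1 /ms inE => /andP [pL1 _]; apply: (linker_ps linked).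
have missedE (B : {fset proc C A S}) : [fset p in B | p \notin X] = B `\` X.
  by apply/fsetP => p; rewrite !inE andbC.
have per_pair g1 g2 : (g1, g2) \in CG n M1 M2 ->
    #|` g2| - minn #|` g1| #|` g2| <= #|` [fset p in g2 | p \notin X] |.
  by move=> inCG; rewrite missedE; exact: card_fsetD_image_cover (CG_image_cover fps inCG).
split => //; rewrite /Cnt.
apply: (@leq_trans (\sum_(gg <- CG n M1 M2) #|` [fset p in gg.2 | p \notin X]|)).
  by rewrite !big_seq; apply: leq_sum => -[g1 g2]; apply: per_pair.
apply: sum_card_disjoint => [|gg hh inCGg inCGh p|gg inCG].
- exact: fset_uniq.
- by rewrite !inE => /andP [pg _] /andP [ph _]; exact: (CG_snd_disjoint _ _ inCGg inCGh _ pg ph).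
- by rewrite /= !missedE; apply/fsetSD/(CG_snd_sub _ inCG).
Qed.
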